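(* Let $f_1,\dots,f_n$ be arbitrary linear functions. There exists $r>0$ such that for every real $\epsilon$ with $|\epsilon|<r$ and all permutations $\sigma,\rho$ of $[n]$: if $(f^{(\epsilon)})^\sigma\le(f^{(\epsilon)})^\rho$ then $f^\sigma\le f^\rho$.
   Context: A linear function is $f(x)=ax+b$ with $\alpha(f)=a$. For a real $\epsilon$, $f^{(\epsilon)}=f$ if $\alpha(f)\ne0$ and $f^{(\epsilon)}(x)=f(x)+\epsilon x$ if $\alpha(f)=0$. For a permutation $\sigma$, $f^\sigma=f_{\sigma(n)}\circ\cdots\circ f_{\sigma(1)}$ and $(f^{(\epsilon)})^\sigma=f^{(\epsilon)}_{\sigma(n)}\circ\cdots\circ f^{(\epsilon)}_{\sigma(1)}$. Inequalities between functions are pointwise. *)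

From mathcomp Require Import all_boot all_order all_algebra all_fingroup.
From mathcomp Require Import reals.
Set Implicit Arguments. Unset Strict Implicit. Unset Printing Implicit Defensive.
Import Order.TTheory GRing.Theory Num.Theory.
Local Open Scope ring_scope.

(* A linear function f(x) = a x + b is represented by its pair (a, b). *)
Definition linfn (R : realType) := (R * R)%type.

Definition lf_apply (R : realType) (f : linfn R) (x : R) : R := f.1 * x + f.2.

Definition lf_alpha (R : realType) (f : linfn R) : R := f.1.

Definition lf_pert (R : realType) (eps : R) (f : linfn R) : linfn R :=
  if lf_alpha f == 0 then (f.1 + eps, f.2) else f.

(* f^sigma = f_{sigma(n)} o ... o f_{sigma(1)} as a function R -> R:
   f_{sigma(1)} is applied first. *)
Definition lf_comp_perm (R : realType) (n : nat) (f : 'I_n -> linfn R)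
  (s : 'S_n) (x : R) : R :=
  foldl (fun y i => lf_apply (f (s i)) y) x (enum 'I_n).

From mathcomp Require Import all_boot all_order all_algebra all_fingroup.
From mathcomp Require Import reals.
From mathcomp Require Import all_classical all_reals all_analysis.
From mathcomp Require Import ring.
Import Order.TTheory GRing.Theory Num.Theory numFieldNormedType.Exports.
Local Open Scope ring_scope.

(* Every composite f^sigma is affine with slope the product of all the slopes,
   which does not depend on sigma, so f^sigma <= f^rho compares only the
   intercepts f^sigma(0) and f^rho(0).  The same holds for the perturbed family.
   The intercepts of the perturbed composites depend continuously on eps, so a
   strict inequality f^rho(0) < f^sigma(0) persists for small |eps|; taking the
   smallest radius over the finitely many pairs (sigma, rho) gives r. *)

Section LinearFunctions.
Variable R : realType.

Lemma lf_apply_pert (eps : R) (h : linfn R) (x : R) :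
  lf_apply (lf_pert eps h) x = lf_apply h x + (lf_alpha h == 0)%:R * eps * x.
Proof.
by rewrite /lf_pert /lf_apply; case: eqP => _ /=; rewrite ?mul1r ?mul0r; ring.
Qed.

Lemma lf_pert0 (h : linfn R) : lf_pert 0 h = h.
Proof. by rewrite /lf_pert; case: ifP => // _; rewrite addr0 -surjective_pairing. Qed.

Lemma foldl_lf_apply_affine (T : Type) (g : T -> linfn R) (l : seq T) (x : R) :
  foldl (fun y i => lf_apply (g i) y) x l =
  (\prod_(i <- l) lf_alpha (g i)) * x + foldl (fun y i => lf_apply (g i) y) 0 l.
Proof.
elim: l x => [|a l IH] x /=; first by rewrite big_nil mul1r addr0.
by rewrite IH [in RHS]IH big_cons /lf_apply /lf_alpha mulr0 add0r; ring.
Qed.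

Lemma lf_comp_perm_affine (n : nat) (g : 'I_n -> linfn R) (s : 'S_n) (x : R) :
  lf_comp_perm g s x = (\prod_i lf_alpha (g i)) * x + lf_comp_perm g s 0.
Proof.
rewrite /lf_comp_perm foldl_lf_apply_affine big_enum /=; congr (_ * _ + _).
by rewrite [RHS](reindex_inj (@perm_inj _ s)).
Qed.

Lemma lf_comp_perm_le_intercept (n : nat) (g : 'I_n -> linfn R) (s t : 'S_n) :
  (forall x, lf_comp_perm g s x <= lf_comp_perm g t x) <->
  lf_comp_perm g s 0 <= lf_comp_perm g t 0.
Proof.
split=> [/(_ 0) // | le0 x].
by rewrite lf_comp_perm_affine [leRHS]lf_comp_perm_affine lerD2l.
Qed.

Lemma lf_apply_pert_continuous (h : linfn R) (y : R -> R) :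
  {for 0, continuous y} ->
  {for 0, continuous (fun eps => lf_apply (lf_pert eps h) (y eps))}.
Proof.
move=> cy; have -> : (fun eps => lf_apply (lf_pert eps h) (y eps)) =
    (fun eps => lf_apply h (y eps) + (lf_alpha h == 0)%:R * eps * y eps).
  by apply: funext => eps; rewrite lf_apply_pert.
rewrite /prop_for /continuous_at /=.
apply: cvgD; last by apply: cvgM => //; apply: cvgM; [exact: cvg_cst | exact: cvg_id].
by apply: cvgD; [apply: cvgM => //; exact: cvg_cst | exact: cvg_cst].
Qed.

Lemma foldl_lf_pert_continuous (T : Type) (g : T -> linfn R) (l : seq T)
    (y : R -> R) : {for 0, continuous y} ->
  {for 0, continuous (fun eps =>
     foldl (fun z i => lf_apply (lf_pert eps (g i)) z) (y eps) l)}.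
Proof.
by elim: l y => [|a l IH] y cy //=; apply/IH/lf_apply_pert_continuous.
Qed.

Lemma lf_comp_perm_pert_continuous (n : nat) (g : 'I_n -> linfn R) (s : 'S_n) :
  {for 0, continuous (fun eps => lf_comp_perm (fun i => lf_pert eps (g i)) s 0)}.
Proof.
exact: (@foldl_lf_pert_continuous _ (fun i => g (s i)) _ (fun=> 0) (cvg_cst _)).
Qed.

End LinearFunctions.

Lemma near0_continuous_lt_persists (R : realType) (I : finType) (g : I -> R -> R) :
  (forall i, {for 0, continuous (g i)}) ->
  \forall eps \near 0, forall p : I * I,
    g p.1 0 < g p.2 0 -> g p.1 eps < g p.2 eps.
Proof.
move=> cg; apply: (@filter_forall _ _ _ (nbhs (0 : R))) => -[i j] /=.
have [lt_ij | _] := ltP (g i 0) (g j 0); last exact: nearW.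
have cgji : (g j eps - g i eps @[eps --> 0] --> g j 0 - g i 0)%classic.
  exact: cvgB (cg j) (cg i).
rewrite -subr_gt0 in lt_ij.
near=> eps => _; rewrite -subr_gt0; near: eps.
exact: cvgr_gt cgji _ lt_ij.
Unshelve. all: by end_near.
Qed.

Theorem mainTheorem15 (R : realType) (n : nat) (f : 'I_n -> linfn R) :
  exists2 r : R, 0 < r &
    forall (eps : R), `|eps| < r ->
    forall (sigma rho : 'S_n),
      (forall x : R, lf_comp_perm (fun i => lf_pert eps (f i)) sigma x
                     <= lf_comp_perm (fun i => lf_pert eps (f i)) rho x) ->
      (forall x : R, lf_comp_perm f sigma x <= lf_comp_perm f rho x).
Proof.
pose B (s : 'S_n) (eps : R) := lf_comp_perm (fun i => lf_pert eps (f i)) s 0.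
have B0 s : B s 0 = lf_comp_perm f s 0.
  by rewrite /B; congr lf_comp_perm; apply: funext => i; rewrite lf_pert0.
have /nbhs_normP [r r0 Br] :=
  @near0_continuous_lt_persists _ _ B (@lf_comp_perm_pert_continuous _ _ f).
exists r => // eps eps_r sigma rho /lf_comp_perm_le_intercept le_eps.
apply/lf_comp_perm_le_intercept; rewrite -(B0 sigma) -(B0 rho) leNgt.
apply/negP => lt0; have : `|0 - eps| < r by rewrite sub0r normrN.
move/Br/(_ (rho, sigma) lt0); rewrite ltNge => /negP; apply; exact: le_eps.
Qed.
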